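(* Let $\mathcal{R}_{\mathsf{pdiv}}$ be the PTRS with rules $\mathsf{minus}(x,\mathsf{0})\to\{1:x\}$, $\mathsf{minus}(\mathsf{s}(x),\mathsf{s}(y))\to\{1:\mathsf{minus}(x,y)\}$, $\mathsf{div}(\mathsf{0},\mathsf{s}(y))\to\{1:\mathsf{0}\}$, $\mathsf{div}(\mathsf{s}(x),\mathsf{s}(y))\to\{\tfrac12:\mathsf{div}(\mathsf{s}(x),\mathsf{s}(y)),\ \tfrac12:\mathsf{s}(\mathsf{div}(\mathsf{minus}(x,y),\mathsf{s}(y)))\}$. There is no monotonic, multilinear polynomial interpretation $\mathrm{Pol}$ over $\mathbb{N}$ such that for every rule $\ell\to\{p_1:r_1,\dots,p_k:r_k\}\in\mathcal{R}_{\mathsf{pdiv}}$ both (1) $\mathrm{Pol}(\ell)>\mathrm{Pol}(r_j)$ for some $1\le j\le k$ and (2) $\mathrm{Pol}(\ell)\ge\sum_jp_j\cdot\mathrm{Pol}(r_j)$ hold.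
   Context: A polynomial interpretation assigns to every $n$-ary function symbol $f$ a polynomial $f_{\mathrm{Pol}}\in\mathbb{N}[x_1,\dots,x_n]$, extended homomorphically to terms; an inequation between interpreted terms holds if it is true for all instantiations of the variables by natural numbers. Monotonic: $x>y$ implies $f_{\mathrm{Pol}}(\dots,x,\dots)>f_{\mathrm{Pol}}(\dots,y,\dots)$ for every $f$ and argument position. Multilinear: every monomial of each $f_{\mathrm{Pol}}(x_1,\dots,x_n)$ has the form $c\,x_1^{e_1}\cdots x_n^{e_n}$ with $c\in\mathbb{N}$, $e_i\in\{0,1\}$. *)

From Stdlib Require List.
From mathcomp Require Import all_boot all_order all_algebra.
Set Implicit Arguments. Unset Strict Implicit. Unset Printing Implicit Defensive.
Import Order.TTheory GRing.Theory Num.Theory.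

Inductive sym := sZero | sS | sMinus | sDiv.

Definition arity (f : sym) : nat :=
  match f with sZero => 0 | sS => 1 | sMinus => 2 | sDiv => 2 end.

Inductive term :=
| tvar of nat
| tzero
| ts of term
| tminus of term & term
| tdiv of term & term.

(* A multilinear polynomial in n variables with natural coefficients:
   sum over subsets S of {0..n-1} of c_S * prod_{i in S} x_i. *)
Definition mlpoly (n : nat) := {ffun {set 'I_n} -> nat}.

Definition eval_mlpoly n (c : mlpoly n) (xs : seq nat) : nat :=
  \sum_(S : {set 'I_n}) c S * \prod_(i in S) nth 0 xs i.

Definition interp := forall f : sym, mlpoly (arity f).

Definition eval_sym (I : interp) (f : sym) (xs : seq nat) : nat :=
  eval_mlpoly (I f) xs.

Fixpoint eval_term (I : interp) (sigma : nat -> nat) (t : term) : nat :=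
  match t with
  | tvar v => sigma v
  | tzero => eval_sym I sZero [::]
  | ts u => eval_sym I sS [:: eval_term I sigma u]
  | tminus u v => eval_sym I sMinus [:: eval_term I sigma u; eval_term I sigma v]
  | tdiv u v => eval_sym I sDiv [:: eval_term I sigma u; eval_term I sigma v]
  end.

Definition monotonic (I : interp) : Prop :=
  forall (f : sym) (xs : seq nat) (i y : nat),
    size xs = arity f -> i < arity f -> nth 0 xs i < y ->
    eval_sym I f xs < eval_sym I f (set_nth 0 xs i y).

Definition prule := (term * seq (rat * term))%type.

Definition x := tvar 0.
Definition y := tvar 1.

Definition R_pdiv : seq prule :=
  [:: (tminus x tzero, [:: (1%R, x)]);
      (tminus (ts x) (ts y), [:: (1%R, tminus x y)]);
      (tdiv tzero (ts y), [:: (1%R, tzero)]);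
      (tdiv (ts x) (ts y),
        [:: ((2%:R)^-1%R, tdiv (ts x) (ts y));
            ((2%:R)^-1%R, ts (tdiv (tminus x y) (ts y)))])].

Definition cond_strict (I : interp) (r : prule) : Prop :=
  exists2 pr, Stdlib.Lists.List.In pr r.2 &
    forall sigma : nat -> nat, eval_term I sigma pr.2 < eval_term I sigma r.1.

Definition cond_expect (I : interp) (r : prule) : Prop :=
  forall sigma : nat -> nat,
    (\sum_(pr <- r.2) pr.1 * (eval_term I sigma pr.2)%:R <=
     (eval_term I sigma r.1)%:R :> rat)%R.

From mathcomp Require Import all_boot all_order all_algebra.
From mathcomp Require Import lra.
Import Order.TTheory GRing.Theory Num.Theory.

(* Only monotonicity and the expectation condition (2) of the
   last rule  div(s(x),s(y)) -> {1/2 : div(s(x),s(y)), 1/2 : s(div(minus(x,y),s(y)))}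
   are needed.  Write S, M, D for the
   interpretations of s, minus, div.  Since the left-hand side occurs with
   probability 1/2 on the right, condition (2) forces
        S(D(M(x,y), S y)) <= D(S x, S y)                      for all x, y.
   On the other hand a strictly increasing function on nat dominates the
   identity, so S z >= z and M(0,y) >= y.  Taking x = 0 and y = S 0 + 1 gives
        D(S 0, w) < D(S 0 + 1, w) <= D(M(0, y), w) <= S(D(M(0, y), w))
   with w = S y, contradicting the inequality above. *)

Lemma increasing_ge_id (f : nat -> nat) :
  (forall n, f n < f n.+1) -> forall n, n <= f n.
Proof.
move=> f_incr; elim=> [|n IHn] //.
exact: leq_ltn_trans IHn (f_incr n).
Qed.

(* If l >= (l + t)/2 in the rationals, then t <= l: a rule whose left-hand
   side reappears with probability 1/2 must not increase on the other branch. *)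
Lemma half_average_le (l t : nat) :
  (2%:R^-1 * l%:R + 2%:R^-1 * t%:R <= l%:R :> rat)%R -> t <= l.
Proof. by move=> avg_le; rewrite -(ler_nat rat); lra. Qed.

Definition pdiv_rule : prule :=
  (tdiv (ts x) (ts y),
    [:: ((2%:R)^-1%R, tdiv (ts x) (ts y));
        ((2%:R)^-1%R, ts (tdiv (tminus x y) (ts y)))]).

Lemma pdiv_rule_in_R_pdiv : Stdlib.Lists.List.In pdiv_rule R_pdiv.
Proof. by right; right; right; left. Qed.

Section MonotonicInterpretation.

Variable I : interp.
Hypothesis I_mono : monotonic I.

Let S u := eval_sym I sS [:: u].
Let M u v := eval_sym I sMinus [:: u; v].
Let D u v := eval_sym I sDiv [:: u; v].

Lemma interp_s_ge (u : nat) : u <= S u.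
Proof. by apply: increasing_ge_id => n; exact: (I_mono sS [:: n] 0 n.+1). Qed.

Lemma interp_minus0_ge (v : nat) : v <= M 0 v.
Proof.
by apply: (increasing_ge_id (M 0)) => n; exact: (I_mono sMinus [:: 0; n] 1 n.+1).
Qed.

Lemma interp_div_ltl (u u' w : nat) : u < u' -> D u w < D u' w.
Proof. exact: (I_mono sDiv [:: u; w] 0 u'). Qed.

Lemma interp_div_lel (u u' w : nat) : u <= u' -> D u w <= D u' w.
Proof.
by rewrite leq_eqVlt => /predU1P[-> // | lt_uu']; exact/ltnW/interp_div_ltl.
Qed.

Lemma pdiv_rule_not_expected : ~ cond_expect I pdiv_rule.
Proof.
move=> expect.
have := expect (fun n => if n == 0 then 0 else (S 0).+1).
rewrite !big_cons big_nil /= addr0 => /half_average_le.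
rewrite -/(S 0) -/(S (S 0).+1) -/(M 0 (S 0).+1).
set w := S (S 0).+1; set m := M 0 (S 0).+1.
rewrite -/(D (S 0) w) -/(D m w) -/(S (D m w)) => le_rhs_lhs.
have lt_lhs_rhs : D (S 0) w < S (D m w).
  apply: leq_trans (interp_s_ge _).
  apply: leq_trans (interp_div_lel _ _ w (interp_minus0_ge _)).
  exact: interp_div_ltl.
by move: (leq_trans lt_lhs_rhs le_rhs_lhs); rewrite ltnn.
Qed.

End MonotonicInterpretation.

Theorem mainTheorem9 :
  ~ exists I : interp,
      monotonic I /\
      forall r, Stdlib.Lists.List.In r R_pdiv -> cond_strict I r /\ cond_expect I r.
Proof.
move=> [I [I_mono rules_ok]].
have [_ pdiv_expect] := rules_ok _ pdiv_rule_in_R_pdiv.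
exact: pdiv_rule_not_expected I_mono pdiv_expect.
Qed.
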